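(* In the truncated Gale–Shapley algorithm described in the context, with a weight function $w$ respecting the preferences, for every $i\ge 2$ we have $f_i(R)\le w(L_i)-w(L_{i-1})$.
   Context: Instance: a simple bipartite graph $\mathcal{G}=(R\cup B,E)$ (red nodes $R$, blue nodes $B$) without isolated nodes, each node having a linear preference order on its neighbours. Algorithm (distributed Gale–Shapley): each blue $b$ keeps $p(b)$ (current partner or $\bot$), initially $\bot$. Each red $r$ keeps a list $C(r)$, initially all neighbours in decreasing preference; $c(r)$ (candidate awaiting response, or $\bot$), initially $\bot$; $p(r)$ (partner or $\bot$), initially $\bot$. Each round consists of a blue turn then a red turn. Blue turn, for each $b$: let $P$ be the set of neighbours that sent `propose'; if $P=\emptyset$ do nothing. Otherwise let $Q=P\cup\{p(b)\}$ if $p(b)\ne\bot$, else $Q=P$; let $q$ be $b$'s most preferred node in $Q$; if $q\ne p(b)$, send `break' to $p(b)$ (if $p(b)\ne\bot$), send `accept' to $q$, and set $p(b)\gets q$; send `reject' to every $r\in P\setminus\{q\}$. Red turn, for each $r$: (1) if $c(r)\neq\bot$, receive the message from $c(r)$; if `accept' set $p(r)\gets c(r)$; if `reject' remove $c(r)$ from $C(r)$; then set $c(r)\gets\bot$. (2) If $p(r)\ne\bot$ and $p(r)$ sent `break', remove $p(r)$ from $C(r)$ and set $p(r)\gets\bot$. (3) If $p(r)=\bot$ and $C(r)$ is nonempty, set $c(r)$ to the first element of $C(r)$ and send `propose' to it. Notation: a subscript $i$ denotes the value at the end of round $i$. An edge $\{r,b\}$ is lost when $r$ removes $b$ from $C(r)$;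 $L_i\subseteq E$ is the set of edges lost by the end of round $i$. Let $w:E\to\mathbb{Z}_{>0}$ be a weight function respecting preferences: whenever a node $v$ prefers $x$ over $y$, $w(\{v,x\})\ge w(\{v,y\})$; $w(F)=\sum_{e\in F}w(e)$. The potential of $r\in R$ at the end of round $i$ is $f_i(r)=0$ if $r$ is matched ($p_i(r)\neq\bot$) or $C_i(r)$ is empty, and otherwise $f_i(r)=w(\{r,b\})$ where $b$ is the first element of $C_i(r)$; $f_i(R)=\sum_{r\in R}f_i(r)$. *)

From mathcomp Require Import all_boot all_order.
Set Implicit Arguments. Unset Strict Implicit. Unset Printing Implicit Defensive.

(* The preference of a node v is given by a duplicate-free list of exactly its
   neighbours, in DECREASING order of preference. *)

Section GS.
Variables (R B : finType) (adj : R -> B -> bool)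
          (prefR : R -> seq B) (prefB : B -> seq R).

Definition pref_ok : Prop :=
  (forall r, uniq (prefR r) /\ forall b, (b \in prefR r) = adj r b) /\
  (forall b, uniq (prefB b) /\ forall r, (r \in prefB b) = adj r b).

Definition no_isolated : Prop :=
  (forall r, exists b, adj r b) /\ (forall b, exists r, adj r b).

Definition prefersR (r : R) (b1 b2 : B) : bool :=
  [&& b1 \in prefR r, b2 \in prefR r & index b1 (prefR r) < index b2 (prefR r)].
Definition prefersB (b : B) (r1 r2 : R) : bool :=
  [&& r1 \in prefB b, r2 \in prefB b & index r1 (prefB b) < index r2 (prefB b)].

Definition weight_ok (w : R -> B -> nat) : Prop :=
  (forall r b, adj r b -> 0 < w r b) /\
  (forall r b1 b2, prefersR r b1 b2 -> w r b2 <= w r b1) /\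
  (forall b r1 r2, prefersB b r1 r2 -> w r2 b <= w r1 b).

Record state := State {
  pB : B -> option R;
  C  : R -> seq B;
  cR : R -> option B;
  pR : R -> option B
}.

Definition init : state :=
  State (fun _ => None) prefR (fun _ => None) (fun _ => None).

Section Round.
Variable s : state.

(* Blue turn: P = set of red nodes that sent 'propose' to b (during the
   previous red turn, i.e. those r with c(r) = b). *)
Definition Pset (b : B) : {set R} := [set r | cR s r == Some b].
Definition Qset (b : B) : {set R} :=
  if pB s b is Some r0 then r0 |: Pset b else Pset b.
Definition qsel (b : B) : option R :=
  if Pset b == set0 then None else ohead [seq r <- prefB b | r \in Qset b].
Definition changes (b : B) : bool := (qsel b != None) && (qsel b != pB s b).
Definition newpB (b : B) : option R := if changes b then qsel b else pB s b.
Definition acceptMsg (b : B) (r : R) : bool := changes b && (qsel b == Some r).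
Definition breakMsg (b : B) (r : R) : bool := changes b && (pB s b == Some r).
Definition rejectMsg (b : B) (r : R) : bool :=
  (Pset b != set0) && (r \in Pset b) && (qsel b != Some r).

Definition pR1 (r : R) : option B :=
  if cR s r is Some b then (if acceptMsg b r then Some b else pR s r) else pR s r.
Definition C1 (r : R) : seq B :=
  if cR s r is Some b then (if rejectMsg b r then rem b (C s r) else C s r) else C s r.
Definition brk2 (r : R) : bool :=
  if pR1 r is Some b then breakMsg b r else false.
Definition C2 (r : R) : seq B :=
  if pR1 r is Some b then (if breakMsg b r then rem b (C1 r) else C1 r) else C1 r.
Definition pR2 (r : R) : option B := if brk2 r then None else pR1 r.
Definition cR3 (r : R) : option B :=
  if pR2 r is None then ohead (C2 r) else None.

Definition step : state := State newpB C2 cR3 pR2.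
End Round.

(* state at the end of round i (round 0 = initial state) *)
Definition st (i : nat) : state := iter i step init.

Definition lost_in (j : nat) : {set R * B} :=
  [set e : R * B | (e.2 \in C (st j.-1) e.1) && (e.2 \notin C (st j) e.1)].
Definition Lset (i : nat) : {set R * B} := \bigcup_(1 <= j < i.+1) lost_in j.

Definition wset (w : R -> B -> nat) (F : {set R * B}) : nat :=
  \sum_(e in F) w e.1 e.2.

Definition f (w : R -> B -> nat) (i : nat) (r : R) : nat :=
  if pR (st i) r is Some _ then 0
  else if C (st i) r is b :: _ then w r b else 0.
Definition fR (w : R -> B -> nat) (i : nat) : nat := \sum_(r : R) f w i r.

End GS.

From mathcomp Require Import all_boot all_order.
Set Implicit Arguments. Unset Strict Implicit.

(* If [r] ends round [i] unmatched, then during round [i] it lost the head [c]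
   of its list (its partner broke up, or its candidate rejected it), so its new
   head is the next entry [b] of the preference list and [w r b <= w r c].
   Summing over [r], the potential [f_i(R)] is at most the weight of the edges
   lost during round [i], i.e. [w(L_i) - w(L_(i-1))]. The requirement [i >= 2]
   ensures that every unmatched red node has just proposed to its head. *)

Lemma subseq_index_lt (T : eqType) (x y : T) (t p : seq T) :
  uniq p -> subseq [:: x, y & t] p -> index x p < index y p.
Proof.
elim: p => [|z p IHp] //= /andP[zNp up] sub.
have yp : y \in p.
  by case: eqP sub => _ /mem_subseq; apply; rewrite !inE eqxx ?orbT.
have zy : (z == y) = false by apply: contraNF zNp => /eqP->.
case: eqP sub => [-> | /eqP xz] sub; first by rewrite eqxx zy.
by rewrite eq_sym (negbTE xz) zy ltnS; apply: IHp.
Qed.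

Section Round.
Variables (R B : finType) (prefR : R -> seq B) (prefB : B -> seq R).

Definition consistent (s : state R B) : Prop :=
  [/\ forall r, subseq (C s r) (prefR r),
      forall r b, pR s r = Some b -> cR s r = None /\ ohead (C s r) = Some b,
      forall r b, cR s r = Some b -> pR s r = None /\ ohead (C s r) = Some b
    & forall b r, pB s b = Some r -> pR s r = Some b].

Lemma acceptMsg_rejectMsg s b r :
  acceptMsg prefB s b r -> rejectMsg prefB s b r = false.
Proof. by case/andP=> _ /eqP qb; rewrite /rejectMsg qb eqxx !andbF. Qed.

Lemma qsel_Qset s b r : qsel prefB s b = Some r -> r \in Qset s b.
Proof.
rewrite /qsel; case: ifP => // _.
case E: [seq _ <- _ | _] => [|x l] //= [<-].
have : x \in [seq r0 <- prefB b | r0 \in Qset s b] by rewrite E mem_head.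
by rewrite mem_filter => /andP[].
Qed.

Lemma C_step_subseq s r : subseq (C (step prefB s) r) (C s r).
Proof.
have sub1 : subseq (C1 prefB s r) (C s r).
  rewrite /C1; case: (cR s r) => [c|]; last exact: subseq_refl.
  by case: ifP => _; [exact: rem_subseq | exact: subseq_refl].
rewrite /= /C2; case: (pR1 prefB s r) => [b|]; last exact: sub1.
by case: ifP => _; [exact: subseq_trans (rem_subseq _ _) sub1 | exact: sub1].
Qed.

Lemma step_partner_symmetric s b r : consistent s ->
  pB (step prefB s) b = Some r -> pR (step prefB s) r = Some b.
Proof.
case=> _ HpR HcR HpB; rewrite /= /newpB.
case hch: (changes prefB s b) => hq; last first.
  have hp := HpB _ _ hq; have [hc _] := HpR r b hp.
  have hp1 : pR1 prefB s r = Some b by rewrite /pR1 hc.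
  by rewrite /pR2 /brk2 hp1 /breakMsg hch.
have hacc : acceptMsg prefB s b r by rewrite /acceptMsg hch hq eqxx.
case hc: (cR s r == Some b).
  move/eqP: hc => hc; have [hpn _] := HcR r b hc.
  have hp1 : pR1 prefB s r = Some b by rewrite /pR1 hc hacc.
  rewrite /pR2 /brk2 hp1 /breakMsg.
  by case hpb: (pB s b == Some r); rewrite ?andbF //; move/eqP: hpb => /HpB; rewrite hpn.
(* [r] did not propose to [b], so it was already [b]'s partner: no change. *)
have := qsel_Qset hq; rewrite /Qset.
have rNP : r \notin Pset s b by rewrite inE hc.
case hpb: (pB s b) => [r0|]; last by rewrite (negbTE rNP).
rewrite in_setU1 (negbTE rNP) orbF => /eqP hr.
by move: hch; rewrite /changes hq hpb hr eqxx andbF.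
Qed.

Lemma step_consistent s : consistent s -> consistent (step prefB s).
Proof.
move=> cs; have [Hsub HpR HcR _] := cs.
split=> [r | r b | r b | b r].
- exact: subseq_trans (C_step_subseq s r) (Hsub r).
- rewrite /= /cR3 /pR2 /brk2.
  case hp1: (pR1 prefB s r) => [b'|] //.
  case hbr: breakMsg => // -[<-]; split => //.
  rewrite /C2 hp1 hbr; move: hp1; rewrite /pR1 /C1.
  case hc: (cR s r) => [c|]; last by move=> hp; case: (HpR r b' hp).
  have [hpn hoc] := HcR r c hc.
  by case ha: acceptMsg; [case=> <-; rewrite (acceptMsg_rejectMsg ha) | rewrite hpn].
- by rewrite /= /cR3; case: (pR2 prefB s r).
- exact: step_partner_symmetric.
Qed.

Lemma step_unmatched_proposes_head s r : pR (step prefB s) r = None ->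
  cR (step prefB s) r = ohead (C (step prefB s) r).
Proof. by move=> /= hp; rewrite /cR3 hp. Qed.

Lemma C_step_unmatched s r : consistent s ->
  (pR s r = None -> cR s r = ohead (C s r)) ->
  pR (step prefB s) r = None -> C (step prefB s) r = behead (C s r).
Proof.
case=> _ HpR _ HpB propose; rewrite /= /pR2 /C2 /brk2.
case hp: (pR s r) => [b|].
  have [hc] := HpR r b hp; case hC: (C s r) => [|b0 t] //= -[eb]; subst b0.
  have hp1 : pR1 prefB s r = Some b by rewrite /pR1 hc.
  by rewrite hp1 /C1 hc hC /=; case: breakMsg => //=; rewrite eqxx.
have := propose hp; rewrite /pR1 /C1 hp.
case hC: (C s r) => [|c t] /= -> //.
case ha: (acceptMsg prefB s c r).
  by rewrite (acceptMsg_rejectMsg ha); case: breakMsg => //=; rewrite eqxx.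
case hrj: (rejectMsg prefB s c r) => _; first by rewrite /= eqxx.
(* Neither accepted nor rejected, [r] would already be [c]'s partner. *)
have rP : r \in Pset s c by rewrite inE (propose hp) hC.
have nz : Pset s c != set0 by apply/set0Pn; exists r.
move: hrj; rewrite /rejectMsg nz rP /= => /negbFE /eqP hq.
move: ha; rewrite /acceptMsg /changes hq eqxx andbT /= => /negbFE /eqP hpb.
by move: (HpB c r (esym hpb)); rewrite hp.
Qed.

Lemma st_consistent n : consistent (st prefR prefB n).
Proof.
elim: n => [|n IHn]; last exact: step_consistent.
by split=> //= r; exact: subseq_refl.
Qed.

Lemma Lset_S i :
  Lset prefR prefB i.+1 = Lset prefR prefB i :|: lost_in prefR prefB i.+1.
Proof. by rewrite /Lset big_nat_recr. Qed.

Lemma notin_C_Lset i e : e \in Lset prefR prefB i ->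
  e.2 \notin C (st prefR prefB i) e.1.
Proof.
elim: i => [|i IHi]; first by rewrite /Lset big_geq ?inE.
rewrite Lset_S in_setU => /orP[/IHi | ]; last by rewrite inE => /andP[].
by apply: contra; apply: mem_subseq; apply: C_step_subseq.
Qed.

Lemma wset_Lset_S w i : wset w (Lset prefR prefB i.+1) =
  wset w (Lset prefR prefB i) + wset w (lost_in prefR prefB i.+1).
Proof.
have disj : [disjoint Lset prefR prefB i & lost_in prefR prefB i.+1].
  rewrite -setI_eq0; apply/eqP/setP => e; rewrite !inE.
  by apply/negbTE; apply/andP=> -[/notin_C_Lset/negPf-> /andP[]].
rewrite /wset Lset_S.
rewrite (eq_bigl [predU Lset prefR prefB i & lost_in prefR prefB i.+1]) ?bigU //.
by move=> e; rewrite !inE.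
Qed.

Section Weights.
Variable w : R -> B -> nat.
Hypothesis uniq_prefR : forall r, uniq (prefR r).
Hypothesis w_prefersR : forall r b1 b2, prefersR prefR r b1 b2 -> w r b2 <= w r b1.

Lemma f_le_lost i r :
  f prefR prefB w i.+2 r <= \sum_(e in lost_in prefR prefB i.+2 | e.1 == r) w e.1 e.2.
Proof.
set s := st prefR prefB i.+1.
have [Hsub _ _ _] := st_consistent i.+1.
rewrite /f -/s; case hp: (pR (step prefB s) r) => [//|].
have hC' : C (step prefB s) r = behead (C s r).
  apply: C_step_unmatched hp; first exact: st_consistent.
  exact: (@step_unmatched_proposes_head (st prefR prefB i)).
rewrite hC'; case hC: (C s r) => [|c [|b t]] //=.
have sub : subseq [:: c, b & t] (prefR r) by rewrite -hC.
have /andP[cNbt _] := subseq_uniq sub (uniq_prefR r).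
rewrite (bigD1 (r, c)) ?eqxx ?andbT; last by rewrite inE hC' hC mem_head.
apply: leq_trans (leq_addr _ _); apply: w_prefersR.
rewrite /prefersR !(mem_subseq sub) ?inE ?eqxx ?orbT //=.
exact: subseq_index_lt sub.
Qed.

Lemma fR_le_wset_lost i :
  fR prefR prefB w i.+2 <= wset w (lost_in prefR prefB i.+2).
Proof.
rewrite /fR /wset (partition_big (fun e : R * B => e.1) predT) //=.
by apply: leq_sum => r _; exact: f_le_lost.
Qed.

End Weights.
End Round.

Theorem lemma2 (R B : finType) (adj : R -> B -> bool)
    (prefR : R -> seq B) (prefB : B -> seq R) (w : R -> B -> nat)
    (Hpref : pref_ok adj prefR prefB) (Hiso : no_isolated adj)
    (Hw : weight_ok adj prefR prefB w) (i : nat) (hi : 2 <= i) :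
  fR prefR prefB w i <= wset w (Lset prefR prefB i) - wset w (Lset prefR prefB i.-1).
Proof.
have uniq_prefR r : uniq (prefR r) by case: (Hpref.1 r).
have [_ [w_prefersR _]] := Hw.
case: i hi => [|[|i]] // _.
by rewrite wset_Lset_S /= addKn; apply: fR_le_wset_lost.
Qed.
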